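(* Let $\Omega$ be a finite set and let $p,q$ be probability distributions on $\Omega$. Let $X_1,X_2$ be drawn i.i.d. from $p$ and $\mathcal{S}=\{X_1,X_2\}$, and let $P^\star(\mathrm{acc})$ be the supremum of $\Pr(Z\in\mathcal{S})$ over all valid token-level selection rules with output $Z$. Then $$P^\star(\mathrm{acc})=\min_{\mathcal{A}\subseteq\Omega}\Big\{\sum_{s\in\mathcal{A}}q(s)+\Big(\sum_{s\in\mathcal{A}^c}p(s)\Big)^2+2\Big(\sum_{s\in\mathcal{A}}p(s)\Big)\Big(\sum_{s\in\mathcal{A}^c}p(s)\Big)\Big\},$$ where $\mathcal{A}^c=\Omega\setminus\mathcal{A}$.
   Context: A token-level selection rule is a conditional distribution $\mathcal{P}(\cdot\mid X_1,X_2)$ on $\Omega$; it is valid if its output $Z$ satisfies $\Pr(Z=z)=q(z)$ for all $z\in\Omega$, where $X_1,X_2$ are i.i.d. with law $p$. *)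

From HB Require Import structures.
From mathcomp Require Import all_boot all_order all_algebra.
From mathcomp Require Import all_classical all_reals.
Set Implicit Arguments. Unset Strict Implicit. Unset Printing Implicit Defensive.
Import Order.TTheory GRing.Theory Num.Theory.
Local Open Scope ring_scope.
Local Open Scope classical_set_scope.

Section Defs.
Variables (R : realType) (Omega : finType).

Definition is_distr (p : Omega -> R) : Prop :=
  (forall x, 0 <= p x) /\ \sum_(x : Omega) p x = 1.

(* a token-level selection rule: a conditional distribution P(z | x1, x2) *)
Definition is_selection_rule (K : Omega -> Omega -> Omega -> R) : Prop :=
  forall x1 x2, is_distr (K x1 x2).

Definition output_law (p : Omega -> R) (K : Omega -> Omega -> Omega -> R) (z : Omega) : R :=
  \sum_(x1 : Omega) \sum_(x2 : Omega) p x1 * p x2 * K x1 x2 z.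

Definition valid_rule (p q : Omega -> R) (K : Omega -> Omega -> Omega -> R) : Prop :=
  is_selection_rule K /\ forall z, output_law p K z = q z.

Definition acc_prob (p : Omega -> R) (K : Omega -> Omega -> Omega -> R) : R :=
  \sum_(x1 : Omega) \sum_(x2 : Omega) \sum_(z : Omega)
     (if (z == x1) || (z == x2) then p x1 * p x2 * K x1 x2 z else 0).

Definition opt_acc (p q : Omega -> R) : R :=
  sup [set acc_prob p K | K in [set K | valid_rule p q K]].

Definition objective (p q : Omega -> R) (A : {set Omega}) : R :=
  \sum_(s in A) q s + (\sum_(s in ~: A) p s) ^+ 2
  + 2 * (\sum_(s in A) p s) * (\sum_(s in ~: A) p s).

End Defs.

From HB Require Import structures.
From mathcomp Require Import all_boot all_order all_algebra.
From mathcomp Require Import all_classical all_reals.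
From mathcomp Require Import lra.
Import Order.TTheory GRing.Theory Num.Theory.
Local Open Scope ring_scope.

Set Implicit Arguments. Unset Strict Implicit. Unset Printing Implicit Defensive.

(* A selection rule is a flow in the bipartite network joining each pair
   s = (x1, x2), of supply p x1 * p x2, to the tokens x1 and x2, token z having
   capacity q z; its acceptance probability is the value of the flow, and the
   objective of A is the capacity of the cut made of the tokens of A and of the
   pairs meeting ~: A.  So the theorem is max-flow = min-cut for this network
   (Gale's supply-demand theorem), together with the fact that every flow extends
   to a coupling of the pair law with q, i.e. to a valid rule.  Max-flow = min-cut
   is proved by pushing flow along an edge until either one of its endpoints is
   exhausted or a new proper minimum cut appears, along which the network splits
   into two smaller ones. *)

Lemma bigmin_attained d (X : orderType d) (I : finType) (P : pred I) (F : I -> X) x :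
  \big[Order.min/x]_(i | P i) F i = x \/
  exists2 i, P i & \big[Order.min/x]_(i | P i) F i = F i.
Proof.
elim/big_rec: _ => [|i m Pi [->|[j Pj ->]]]; first by left.
- by case: (leP (F i) x) => _; [right; exists i|left].
- by case: (leP (F i) (F j)) => _; right; [exists i|exists j].
Qed.

Section Transport.
Variables (R : realType) (S T : finType).
Implicit Types (N : S -> {set T}) (w : S -> R) (q : T -> R) (F : S -> T -> R).
Implicit Types (A B C D : {set T}).

Definition is_flow N w q F : Prop :=
  [/\ forall s t, 0 <= F s t, forall s t, t \notin N s -> F s t = 0,
      forall s, \sum_t F s t <= w s & forall t, \sum_s F s t <= q t].

Definition flow_value F := \sum_s \sum_t F s t.

Definition cut_value N w q A := \sum_(t in A) q t + \sum_(s | ~~ (N s \subset A)) w s.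

Definition flow_meets_cut N w q :=
  exists2 F, is_flow N w q F & exists A, cut_value N w q A <= flow_value F.

Lemma flow_value_le_cut N w q F A : is_flow N w q F -> flow_value F <= cut_value N w q A.
Proof.
case=> F0 FN Fw Fq; rewrite /flow_value /cut_value.
rewrite (eq_bigr (fun s => \sum_(t in A) F s t + \sum_(t | t \notin A) F s t));
  last by move=> s _; rewrite [LHS](bigID (mem A)).
rewrite big_split /= exchange_big /= lerD //; first exact: ler_sum.
rewrite (bigID (fun s => N s \subset A)) /= -[X in _ <= X]add0r lerD //.
  rewrite le_eqVlt big1 ?eqxx // => s NA; rewrite big1 // => t tA.
  by apply: FN; apply: contraNN tA; exact: (fintype.subsetP NA).
apply: ler_sum => s _; apply: le_trans (Fw s).
by rewrite [X in _ <= X](bigID (fun t => t \in A)) /= lerDr sumr_ge0.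
Qed.

Lemma is_flowD N w1 w2 q1 q2 F1 F2 :
  is_flow N w1 q1 F1 -> is_flow N w2 q2 F2 -> is_flow N (w1 + w2) (q1 + q2) (F1 + F2).
Proof.
case=> F10 F1N F1w F1q [F20 F2N F2w F2q]; split=> [s t|s t tN|s|t]; rewrite !addrfctE /=.
- exact: addr_ge0.
- by rewrite F1N ?F2N ?addr0.
- by rewrite big_split lerD.
- by rewrite big_split lerD.
Qed.

Lemma flow_valueD F1 F2 : flow_value (F1 + F2) = flow_value F1 + flow_value F2.
Proof. by rewrite /flow_value -big_split; apply: eq_bigr => s _; rewrite -big_split. Qed.

Lemma cut_valueD N w1 w2 q1 q2 A :
  cut_value N (w1 + w2) (q1 + q2) A = cut_value N w1 q1 A + cut_value N w2 q2 A.
Proof. by rewrite /cut_value !big_split /=; lra. Qed.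

Lemma is_flow_subset N N' w q F :
  (forall s, N' s \subset N s) -> is_flow N' w q F -> is_flow N w q F.
Proof.
move=> N'N [F0 FN Fw Fq]; split=> // s t tN.
exact: FN (contraNN (fintype.subsetP (N'N s) t) tN).
Qed.

Definition delta_at (I : eqType) (i0 : I) (e : R) (i : I) : R := if i == i0 then e else 0.

Lemma sum_delta_at (I : finType) (P : pred I) i0 e :
  \sum_(i | P i) delta_at i0 e i = if P i0 then e else 0.
Proof.
rewrite big_mkcond (bigD1 i0) //= /delta_at eqxx big1 ?addr0 // => i /negbTE ->.
by case: ifP.
Qed.

Definition edge_flow s0 t0 e : S -> T -> R := fun s t => delta_at s0 (delta_at t0 e t) s.

Lemma is_flow_edge N s0 t0 e : t0 \in N s0 -> 0 <= e ->
  is_flow N (delta_at s0 e) (delta_at t0 e) (edge_flow s0 t0 e).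
Proof.
move=> t0N e0; split=> [s t|s t|s|t]; rewrite /edge_flow /delta_at.
- by case: (s == s0); case: (t == t0).
- case: (eqVneq s s0) => [-> tN|//]; case: (eqVneq t t0) => [et|//].
  by rewrite et t0N in tN.
- case: (eqVneq s s0) => _; last by rewrite big1.
  by rewrite (sum_delta_at predT t0 e).
- case: (eqVneq t t0) => _; last by rewrite big1 // => s _; case: ifP.
  by rewrite (sum_delta_at predT s0 e).
Qed.

Lemma flow_value_edge s0 t0 e : flow_value (edge_flow s0 t0 e) = e.
Proof.
rewrite /flow_value (bigD1 s0) //= [X in _ + X]big1 ?addr0 => [|s ns0].
- by rewrite /edge_flow /delta_at eqxx (sum_delta_at predT t0 e).
- by rewrite big1 // => t _; rewrite /edge_flow /delta_at (negbTE ns0).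
Qed.

Lemma cut_value_edge N s0 t0 e A :
  cut_value N (delta_at s0 e) (delta_at t0 e) A =
  (if t0 \in A then e else 0) + (if N s0 \subset A then 0 else e).
Proof. by rewrite /cut_value !sum_delta_at; case: (N s0 \subset A). Qed.

Lemma flow_meets_cut_no_edge N w q :
  (forall s, 0 <= w s) -> (forall t, 0 <= q t) ->
  ~ (exists s t, [/\ t \in N s, 0 < w s & 0 < q t]) -> flow_meets_cut N w q.
Proof.
move=> w0 q0 no_edge; exists (fun _ _ => 0).
  by split=> [//|//|s|t]; rewrite big1.
exists [set t | q t == 0]; rewrite /cut_value /flow_value !big1 ?addr0 //.
- move=> s /subsetPn [t tN]; rewrite inE => qt; apply/eqP; rewrite eq_le w0 andbT.
  rewrite leNgt; apply/negP => ws; apply: no_edge; exists s, t.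
  by split=> //; rewrite lt_def qt q0.
- by move=> t; rewrite inE => /eqP.
Qed.

Lemma cut_value_sub_edge N w q s0 t0 e A :
  cut_value N (w - delta_at s0 e) (q - delta_at t0 e) A =
  cut_value N w q A - ((if t0 \in A then e else 0) + (if N s0 \subset A then 0 else e)).
Proof.
rewrite -cut_value_edge -{2}[w](subrK (delta_at s0 e)) -{2}[q](subrK (delta_at t0 e)).
by rewrite (cut_valueD _ (w - _)) addrK.
Qed.

Lemma flow_meets_cut_push N w q s0 t0 e A : t0 \in N s0 -> 0 <= e ->
  (forall B, cut_value N w q A - e <= cut_value N (w - delta_at s0 e) (q - delta_at t0 e) B) ->
  flow_meets_cut N (w - delta_at s0 e) (q - delta_at t0 e) -> flow_meets_cut N w q.
Proof.
move=> t0N e0 cut_ge [F flowF [B cutB]].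
exists (F + edge_flow s0 t0 e).
  rewrite -[w](subrK (delta_at s0 e)) -[q](subrK (delta_at t0 e)).
  exact: is_flowD flowF (is_flow_edge t0N e0).
exists A; rewrite flow_valueD flow_value_edge -lerBlDr.
exact: le_trans (cut_ge B) cutB.
Qed.

(* When A is a minimum cut, no pair with ~~ (N s \subset A) needs to be served
   inside A, so the network splits into its parts inside and outside A. *)
Section TightSplit.
Variables (N : S -> {set T}) (w : S -> R) (q : T -> R) (A : {set T}).

Definition nbhd_in s := N s :&: A.
Definition nbhd_out s := N s :\: A.
Definition supply_in s := if N s \subset A then w s else 0.
Definition supply_out s := if N s \subset A then 0 else w s.
Definition cap_in t := if t \in A then q t else 0.
Definition cap_out t := if t \in A then 0 else q t.

Lemma supply_in_out : supply_in + supply_out = w.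
Proof.
by apply/funext => s; rewrite addrfctE /supply_in /supply_out; case: ifP; rewrite ?addr0 ?add0r.
Qed.

Lemma cap_in_out : cap_in + cap_out = q.
Proof.
by apply/funext => t; rewrite addrfctE /cap_in /cap_out; case: ifP; rewrite ?addr0 ?add0r.
Qed.

Lemma cut_value_setI B :
  cut_value N w q (A :&: B) =
  cut_value nbhd_in supply_in cap_in B + \sum_(s | ~~ (N s \subset A)) w s.
Proof.
rewrite /cut_value -addrA; congr (_ + _).
  rewrite [RHS]big_mkcond [LHS]big_mkcond; apply: eq_bigr => t _.
  by rewrite /cap_in finset.in_setI; case: (t \in A); case: (t \in B).
rewrite big_mkcond [X in X + _]big_mkcond [X in _ + X]big_mkcond -big_split.
apply: eq_bigr => s _ /=.
rewrite /nbhd_in /supply_in finset.subsetI; case: (boolP (N s \subset A)) => NA /=.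
  by rewrite (finset.setIidPl NA) addr0.
by case: ifP; rewrite add0r.
Qed.

Lemma cut_value_setU B :
  cut_value N w q (A :|: B) = \sum_(t in A) q t + cut_value nbhd_out supply_out cap_out B.
Proof.
rewrite /cut_value addrA; congr (_ + _).
  rewrite big_mkcond [X in X + _]big_mkcond [X in _ + X]big_mkcond -big_split.
  apply: eq_bigr => t _ /=; rewrite /cap_out finset.in_setU.
  by case: (t \in A); case: (t \in B); rewrite ?addr0 ?add0r.
rewrite [LHS]big_mkcond [RHS]big_mkcond; apply: eq_bigr => s _.
rewrite /nbhd_out /supply_out subDset; case: (boolP (N s \subset A)) => NA //.
by rewrite (fintype.subset_trans NA (finset.subsetUl A B)).
Qed.

Lemma flow_meets_cut_split :
  (forall B, cut_value N w q A <= cut_value N w q B) ->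
  flow_meets_cut nbhd_in supply_in cap_in -> flow_meets_cut nbhd_out supply_out cap_out ->
  flow_meets_cut N w q.
Proof.
move=> Amin [F1 flow1 [B1 cut1]] [F2 flow2 [B2 cut2]].
exists (F1 + F2).
  rewrite -supply_in_out -cap_in_out; apply: is_flowD.
  - by apply: is_flow_subset flow1 => s; apply: finset.subsetIl.
  - by apply: is_flow_subset flow2 => s; apply: subsetDl.
exists A; rewrite flow_valueD {1}/cut_value lerD //.
- apply: le_trans cut1; have := Amin (A :&: B1).
  by rewrite cut_value_setI {1}/cut_value lerD2r.
- apply: le_trans cut2; have := Amin (A :|: B2).
  by rewrite cut_value_setU {1}/cut_value lerD2l.
Qed.

End TightSplit.

Lemma cut_value_push_ge N w q s0 t0 e A : 0 <= e ->
  (forall B, cut_value N w q A <= cut_value N w q B) ->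
  (forall B, (t0 \in B) && ~~ (N s0 \subset B) -> e <= cut_value N w q B - cut_value N w q A) ->
  forall B, cut_value N w q A - e <= cut_value N (w - delta_at s0 e) (q - delta_at t0 e) B.
Proof.
move=> e0 Amin e_le_bad B; rewrite cut_value_sub_edge.
have := Amin B; have := e_le_bad B.
by case: (t0 \in B); case: (N s0 \subset B) => /= bad_ge ge_min;
  [|have := bad_ge isT|..]; lra.
Qed.

Lemma pos_sub_delta_subset (I : finType) (f : I -> R) i0 e : 0 <= e ->
  [set i | 0 < (f - delta_at i0 e) i] \subset [set i | 0 < f i].
Proof.
move=> e0; apply/fintype.subsetP => i; rewrite !inE !fctE /delta_at.
by case: eqP => // _ /lt_le_trans; apply; rewrite gerBl.
Qed.

Lemma pos_sub_delta_proper (I : finType) (f : I -> R) i0 : 0 < f i0 ->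
  [set i | 0 < (f - delta_at i0 (f i0)) i] \proper [set i | 0 < f i].
Proof.
move=> fi0; rewrite fintype.properE pos_sub_delta_subset ?ltW //=.
by apply/fintype.subsetPn; exists i0; rewrite !inE ?fctE /delta_at ?eqxx ?subrr ?ltxx.
Qed.

Definition support_size w q := (#|[set s | (0 < w s)%R]| + #|[set t | (0 < q t)%R]|)%N.

Lemma support_size_push w q s0 t0 : 0 < w s0 -> 0 < q t0 ->
  let e := Num.min (w s0) (q t0) in
  (support_size (w - delta_at s0 e)%R (q - delta_at t0 e)%R < support_size w q)%N.
Proof.
move=> ws0 qt0 /=; rewrite /support_size.
have e0 : 0 <= Num.min (w s0) (q t0) by rewrite le_min !ltW.
have subw := subset_leq_card (pos_sub_delta_subset w s0 e0).
have subq := subset_leq_card (pos_sub_delta_subset q t0 e0).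
case: leP subw subq => _ subw subq.
- by rewrite -addSn leq_add // (proper_card (pos_sub_delta_proper ws0)).
- by rewrite -addnS leq_add // (proper_card (pos_sub_delta_proper qt0)).
Qed.

Section Induction.
Variable n : nat.
Hypothesis IHcard : forall (D : {set T}) N w q, (#|D| <= n)%N -> (forall s, N s \subset D) ->
  (forall s, 0 <= w s) -> (forall t, 0 <= q t) -> flow_meets_cut N w q.

Lemma flow_meets_cut_tight D N w q B : (#|D| <= n.+1)%N -> (forall s, N s \subset D) ->
  (forall s, 0 <= w s) -> (forall t, 0 <= q t) ->
  (forall C, cut_value N w q B <= cut_value N w q C) ->
  ~~ [disjoint D & B] -> ~~ (D \subset B) -> flow_meets_cut N w q.
Proof.
move=> Dn ND w0 q0 Bmin DB_meet DB_sub.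
have IH D' N' w' q' : D' \proper D -> (forall s, N' s \subset D') ->
    (forall s, 0 <= w' s) -> (forall t, 0 <= q' t) -> flow_meets_cut N' w' q'.
  by move=> /proper_card D'D; apply: IHcard; rewrite -ltnS (leq_trans D'D Dn).
apply: flow_meets_cut_split Bmin _ _.
- apply: (IH (D :&: B)) => [|s|s|t].
  + by rewrite fintype.properE finset.subsetIl finset.subsetI subxx.
  + exact: finset.setSI.
  + by rewrite /supply_in; case: ifP.
  + by rewrite /cap_in; case: ifP.
- apply: (IH (D :\: B)) => [|s|s|t].
  + by rewrite fintype.properE subsetDl subsetD subxx.
  + exact: finset.setSD.
  + by rewrite /supply_out; case: ifP.
  + by rewrite /cap_out; case: ifP.
Qed.

Variable m : nat.
Hypothesis IHsupport : forall D N w q, (#|D| <= n.+1)%N -> (support_size w q <= m)%N ->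
  (forall s, N s \subset D) -> (forall s, 0 <= w s) -> (forall t, 0 <= q t) ->
  flow_meets_cut N w q.

Lemma flow_meets_cut_step D N w q : (#|D| <= n.+1)%N -> (support_size w q <= m.+1)%N ->
  (forall s, N s \subset D) -> (forall s, 0 <= w s) -> (forall t, 0 <= q t) ->
  flow_meets_cut N w q.
Proof.
move=> Dn supp ND w0 q0.
have [[s0 [t0 [t0N ws0 qt0]]]|no_edge] :=
  pselect (exists s t, [/\ t \in N s, 0 < w s & 0 < q t]); last exact: flow_meets_cut_no_edge.
have [A _ Amin] := @arg_minP _ _ _ finset.set0 predT (cut_value N w q) isT.
have {}Amin B : cut_value N w q A <= cut_value N w q B by exact: Amin.
(* Pushing e along (s0, t0) lowers every cut by e, except the bad ones, which
   lose 2 e; e is the largest push that lowers the minimum cut by exactly e. *)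
pose bad B := (t0 \in B) && ~~ (N s0 \subset B).
pose e := \big[Num.min/Num.min (w s0) (q t0)]_(B | bad B)
            (cut_value N w q B - cut_value N w q A).
have e_ge0 : 0 <= e.
  by apply: le_bigmin => [|B _]; rewrite ?subr_ge0 // le_min !ltW.
have e_le_min : e <= Num.min (w s0) (q t0) by exact: bigmin_le_id.
have e_le_bad B : bad B -> e <= cut_value N w q B - cut_value N w q A by exact: bigmin_le_cond.
have wr0 s : 0 <= (w - delta_at s0 e) s.
  rewrite !fctE /delta_at; case: (eqVneq s s0) => [->|_]; last by rewrite subr0.
  by rewrite subr_ge0 (le_trans e_le_min) // ge_min lexx.
have qr0 t : 0 <= (q - delta_at t0 e) t.
  rewrite !fctE /delta_at; case: (eqVneq t t0) => [->|_]; last by rewrite subr0.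
  by rewrite subr_ge0 (le_trans e_le_min) // ge_min lexx orbT.
have cut_red_ge := cut_value_push_ge e_ge0 Amin e_le_bad.
apply: (flow_meets_cut_push t0N e_ge0 cut_red_ge).
have [e_min|[B badB eB]] := bigmin_attained bad
  (fun B => cut_value N w q B - cut_value N w q A) (Num.min (w s0) (q t0)).
  apply: (IHsupport Dn _ ND wr0 qr0); rewrite -ltnS; apply: leq_trans supp.
  by rewrite /e e_min; exact: support_size_push.
case/andP: (badB) => t0B Ns0B; rewrite -/e in eB.
apply: (flow_meets_cut_tight (B := B) Dn ND wr0 qr0).
- move=> C; apply: le_trans (cut_red_ge C).
  by rewrite cut_value_sub_edge t0B (negbTE Ns0B); lra.
- apply/negP => /disjointFr/(_ (fintype.subsetP (ND s0) t0 t0N)).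
  by rewrite t0B.
- by apply: contra Ns0B => DB; exact: fintype.subset_trans (ND s0) DB.
Qed.

End Induction.

Theorem max_flow_min_cut N w q :
  (forall s, 0 <= w s) -> (forall t, 0 <= q t) -> flow_meets_cut N w q.
Proof.
have main n m D N' w' q' : (#|D| <= n)%N -> (support_size w' q' <= m)%N ->
    (forall s, N' s \subset D) -> (forall s, 0 <= w' s) -> (forall t, 0 <= q' t) ->
    flow_meets_cut N' w' q'.
  elim: n m D N' w' q' => [|n IHn] m D N' w' q' Dn.
    move=> _ ND w0 q0; apply: flow_meets_cut_no_edge => // -[s [t [tN _ _]]].
    by move: Dn (fintype.subsetP (ND s) t tN); rewrite leqn0 => /eqP/cards0_eq ->; rewrite inE.
  elim: m D N' w' q' Dn => [|m IHm] D N' w' q' Dn supp ND w0 q0.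
    apply: flow_meets_cut_no_edge => // -[s [t [_ ws _]]].
    move: supp; rewrite leqn0 addn_eq0 => /andP[/eqP/cards0_eq w_supp _].
    by have := finset.in_set0 s; rewrite -w_supp inE ws.
  exact: (flow_meets_cut_step (fun D N w q Dn => IHn _ D N w q Dn (leqnn _)) IHm Dn supp).
by move=> w0 q0; apply: (main _ _ [set: T]) => // s; apply: finset.subsetT.
Qed.

Lemma flow_extends_to_coupling N w q F : is_flow N w q F ->
  \sum_s w s = \sum_t q t ->
  exists G : S -> T -> R, [/\ forall s t, F s t <= G s t,
    forall s, \sum_t G s t = w s & forall t, \sum_s G s t = q t].
Proof.
case=> F0 _ Fw Fq mass.
(* the residual supplies u and capacities r have equal totals: couple them by
   their normalised product *)
pose u s := w s - \sum_t F s t; pose r t := q t - \sum_s F s t.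
have u0 s : 0 <= u s by rewrite subr_ge0.
have r0 t : 0 <= r t by rewrite subr_ge0.
have sum_ur : \sum_s u s = \sum_t r t by rewrite !sumrB mass exchange_big.
have [r_eq0|r_neq0] := eqVneq (\sum_t r t) 0.
  exists F; split=> [//|s|t]; apply/eqP; rewrite eq_sym -subr_eq0; apply/eqP.
  - exact: (psumr_eq0P (P := predT) (fun s _ => u0 s) (etrans sum_ur r_eq0) isT).
  - exact: (psumr_eq0P (P := predT) (fun t _ => r0 t) r_eq0 isT).
exists (fun s t => F s t + u s * r t / \sum_t r t); split=> [s t|s|t].
- by rewrite lerDl divr_ge0 ?mulr_ge0 ?sumr_ge0.
- by rewrite big_split /= -mulr_suml -mulr_sumr mulfK // subrKC.
- by rewrite big_split /= -!mulr_suml sum_ur mulrC mulKf // subrKC.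
Qed.

End Transport.

Section SelectionRule.
Variables (R : realType) (Omega : finType) (p q : Omega -> R).
Hypotheses (hp : is_distr p) (hq : is_distr q).
Implicit Types (A : {set Omega}) (K : Omega -> Omega -> Omega -> R).

Definition pair_nbhd (s : Omega * Omega) : {set Omega} := [set s.1; s.2].
Definition pair_mass (s : Omega * Omega) : R := p s.1 * p s.2.

Lemma pair_mass_ge0 s : 0 <= pair_mass s.
Proof. by case: hp => p0 _; rewrite mulr_ge0. Qed.

Lemma sum_pair_mass : \sum_s pair_mass s = 1.
Proof.
case: hp => _ p1; rewrite /pair_mass -(pair_bigA _ (fun x y => p x * p y)) /=.
by rewrite -big_distrlr /= p1 mulr1.
Qed.

Lemma objective_cut_value A : objective p q A = cut_value pair_nbhd pair_mass q A.
Proof.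
case: hp => _ p1; rewrite /objective /cut_value -addrA; congr (_ + _).
have inA : \sum_(s | pair_nbhd s \subset A) pair_mass s = (\sum_(x in A) p x) ^+ 2.
  rewrite expr2 big_distrlr /= pair_big_dep /=; apply: eq_bigl => s.
  by rewrite /pair_nbhd finset.subUset !finset.sub1set.
have notA : \sum_(s | ~~ (pair_nbhd s \subset A)) pair_mass s = 1 - (\sum_(x in A) p x) ^+ 2.
  rewrite -inA -sum_pair_mass [in RHS](bigID (fun s => pair_nbhd s \subset A)) /=.
  by rewrite addrAC subrr add0r.
have compl : \sum_(x in ~: A) p x = 1 - \sum_(x in A) p x.
  rewrite -p1 [in RHS](bigID (mem A)) /= addrAC subrr add0r.
  by apply: eq_bigl => x; rewrite finset.in_setC.
rewrite notA compl; lra.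
Qed.

Definition rule_flow K (s : Omega * Omega) (t : Omega) : R :=
  if t \in pair_nbhd s then pair_mass s * K s.1 s.2 t else 0.

Lemma acc_prob_flow_value K : acc_prob p K = flow_value (rule_flow K).
Proof.
rewrite /acc_prob /flow_value -(pair_bigA _ (fun x y => \sum_t rule_flow K (x, y) t)) /=.
apply: eq_bigr => x _; apply: eq_bigr => y _; apply: eq_bigr => z _.
by rewrite /rule_flow /pair_nbhd finset.in_set2.
Qed.

Lemma valid_rule_is_flow K : valid_rule p q K -> is_flow pair_nbhd pair_mass q (rule_flow K).
Proof.
case=> K_rule K_law.
have massK s t : 0 <= pair_mass s * K s.1 s.2 t.
  by rewrite mulr_ge0 ?pair_mass_ge0 //; case: (K_rule s.1 s.2).
split=> [s t|s t tN|s|t]; rewrite /rule_flow.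
- by case: ifP.
- by rewrite (negbTE tN).
- apply: le_trans (_ : \sum_t pair_mass s * K s.1 s.2 t <= _).
    by apply: ler_sum => t _; case: ifP => // _; exact: massK.
  by rewrite -mulr_sumr; case: (K_rule s.1 s.2) => _ ->; rewrite mulr1.
- rewrite -K_law /output_law -(pair_bigA _ (fun x y => rule_flow K (x, y) t)) /=.
  apply: ler_sum => x _; apply: ler_sum => y _.
  by rewrite /rule_flow; case: ifP => // _; exact: (massK (x, y)).
Qed.

Lemma acc_prob_le_objective K A : valid_rule p q K -> acc_prob p K <= objective p q A.
Proof.
move=> vK; rewrite acc_prob_flow_value objective_cut_value.
exact: flow_value_le_cut (valid_rule_is_flow vK).
Qed.

Lemma coupling_rule (G : Omega * Omega -> Omega -> R) :
  (forall s t, 0 <= G s t) -> (forall s, \sum_t G s t = pair_mass s) ->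
  (forall t, \sum_s G s t = q t) ->
  exists2 K, valid_rule p q K & forall x y z, p x * p y * K x y z = G (x, y) z.
Proof.
move=> G0 G_row G_col; case: hq => q0 q1.
pose K x y z := if pair_mass (x, y) == 0 then q z else G (x, y) z / pair_mass (x, y).
have massK x y z : p x * p y * K x y z = G (x, y) z.
  rewrite /K; case: eqP => [m0|/eqP m_neq0]; last by rewrite mulrC divfK.
  rewrite [p x * p y]m0 mul0r; apply/esym.
  exact: (psumr_eq0P (P := predT) (fun t _ => G0 (x, y) t) (etrans (G_row _) m0) isT).
exists K => //; split=> [x y|z].
  rewrite /K; case: eqP => [_ //|/eqP m_neq0]; split=> [z|].
    by rewrite divr_ge0 ?G0 ?pair_mass_ge0.
  by rewrite -mulr_suml G_row divff.
rewrite /output_law -G_col.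
under eq_bigr do under eq_bigr do rewrite massK.
by rewrite pair_bigA; apply: eq_bigr => -[].
Qed.

Lemma exists_rule_acc_prob_ge_objective :
  exists2 K, valid_rule p q K & exists A, objective p q A <= acc_prob p K.
Proof.
case: hq => q0 q1.
have [F flowF [A cutA]] := max_flow_min_cut pair_nbhd pair_mass_ge0 q0.
have [G [FG G_row G_col]] := flow_extends_to_coupling flowF (etrans sum_pair_mass (esym q1)).
have [F0 FN _ _] := flowF.
have [K vK massK] := coupling_rule (fun s t => le_trans (F0 s t) (FG s t)) G_row G_col.
exists K => //; exists A; rewrite objective_cut_value acc_prob_flow_value.
apply: (le_trans cutA); apply: ler_sum => s _; apply: ler_sum => t _.
rewrite /rule_flow /pair_mass massK -surjective_pairing.
by case: ifP => [_ //|/negbT tN]; rewrite FN.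
Qed.

End SelectionRule.

Theorem theorem3 (R : realType) (Omega : finType) (p q : Omega -> R)
  (hp : is_distr p) (hq : is_distr q) :
  exists A0 : {set Omega},
    opt_acc p q = objective p q A0 /\
    forall A : {set Omega}, objective p q A0 <= objective p q A.
Proof.
have [A0 _ A0min] := @arg_minP _ _ _ finset.set0 predT (objective p q) isT.
have {}A0min A : objective p q A0 <= objective p q A by exact: A0min.
exists A0; split=> //.
have [K vK [A objA_le]] := exists_rule_acc_prob_ge_objective hp hq.
have accK : acc_prob p K = objective p q A0.
  by apply/le_anti; rewrite acc_prob_le_objective //= (le_trans (A0min A)).
have ub : ubound [set acc_prob p K | K in [set K | valid_rule p q K]] (objective p q A0).
  by move=> _ [K' vK' <-]; exact: acc_prob_le_objective.
apply/le_anti; rewrite ge_sup //=; last by exists (acc_prob p K), K.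
by rewrite -accK ub_le_sup //; [exists (objective p q A0) | exists K].
Qed.
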